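(* If a graph $G$ has $n\ge 1$ vertices, then $m(G)\le \lceil n/3\rceil+1$.
   Context: All graphs are finite, simple and undirected. A list assignment $L$ for a graph $G$ assigns to each vertex $v$ a set $L(v)$ of colors; an $L$-coloring is a proper vertex coloring $c$ of $G$ with $c(v)\in L(v)$ for every vertex $v$. A $k$-list assignment is a list assignment with $|L(v)|=k$ for all $v$. $G$ is uniquely $k$-list colorable (U$k$LC) if there exists a $k$-list assignment $L$ such that $G$ has exactly one $L$-coloring. $G$ has property $M(k)$ if it is not U$k$LC, i.e. for every $k$-list assignment $L$, $G$ has either no $L$-coloring or at least two $L$-colorings. The m-number $m(G)$ is the least integer $k\ge 1$ such that $G$ has property $M(k)$. (Every U$k$LC graph is also U$(k-1)$LC, so $G$ is U$k$LC iff $k<m(G)$.) *)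

From mathcomp Require Import all_boot.
Set Implicit Arguments. Unset Strict Implicit. Unset Printing Implicit Defensive.

(* Colors are natural numbers (any countable palette suffices: only finitely many
   colors occur in a list assignment). *)

Definition simple_graph (T : finType) (e : rel T) : Prop :=
  symmetric e /\ irreflexive e.

Definition k_list_assignment (T : finType) (k : nat) (L : T -> seq nat) : Prop :=
  forall v, uniq (L v) /\ size (L v) = k.

Definition L_coloring (T : finType) (e : rel T) (L : T -> seq nat) (c : T -> nat) : Prop :=
  (forall v, c v \in L v) /\ (forall x y, e x y -> c x != c y).

Definition unique_L_colorable (T : finType) (e : rel T) (L : T -> seq nat) : Prop :=
  exists c, L_coloring e L c /\ forall c', L_coloring e L c' -> forall v, c' v = c v.

Definition UkLC (T : finType) (e : rel T) (k : nat) : Prop :=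
  exists L, @k_list_assignment T k L /\ unique_L_colorable e L.

Definition propM (T : finType) (e : rel T) (k : nat) : Prop := ~ UkLC e k.

Definition is_m_number (T : finType) (e : rel T) (m : nat) : Prop :=
  1 <= m /\ propM e m /\ forall k, 1 <= k -> k < m -> ~ propM e k.

Definition ceil_div (n d : nat) : nat := (n + d.-1) %/ d.

From mathcomp Require Import all_boot zify.
From Stdlib Require Import Classical.
Set Implicit Arguments. Unset Strict Implicit. Unset Printing Implicit Defensive.

(* A graph with n >= 1 vertices that is uniquely colorable from lists of size
   k satisfies n >= 3k - 2. Fix the unique coloring c. If some color class has
   at least three vertices, deleting it and its color from every list leaves a
   unique coloring from lists of size k - 1, and induction applies. Otherwise
   consider the digraph on used colors with an arc a -> b when every vertex
   colored a has b in its list: recoloring along a directed cycle would give a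
   second coloring, so every set of used colors contains a sink. A sink among
   all colors has a class {u, w} whose lists, minus the sink color, are
   disjoint sets of other used colors, so at least 2k - 1 colors are used; a
   sink among the singleton classes {x} has all k - 1 other colors of its list
   on two-vertex classes. Counting vertices class by class,
   n >= (2k - 1) + (k - 1). *)


Definition coloring_on (T K : finType) (e : rel T) (P : {set T})
    (L : T -> {set K}) (c : T -> K) :=
  {in P, forall v, c v \in L v} /\
  {in P &, forall x y, e x y -> c x != c y}.

Definition unique_coloring_on (T K : finType) (e : rel T) (P : {set T})
    (L : T -> {set K}) (c : T -> K) :=
  coloring_on e P L c /\ forall c', coloring_on e P L c' -> {in P, c' =1 c}.

Definition color_class (T K : finType) (P : {set T}) (c : T -> K) (a : K) :=
  [set v in P | c v == a].

Definition color_arc (T K : finType) (P : {set T}) (L : T -> {set K})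
    (c : T -> K) (a b : K) :=
  [forall v in color_class P c a, b \in L v].

Lemma in_color_class (T K : finType) (P : {set T}) (c : T -> K) a v :
  (v \in color_class P c a) = (v \in P) && (c v == a).
Proof. by rewrite inE. Qed.

Lemma exists_stable_injective_subset (K : finType) (f : K -> K) (Q : {set K}) :
  Q != set0 -> f @: Q \subset Q ->
  exists Y : {set K},
    [/\ Y != set0, Y \subset Q, f @: Y \subset Y & {in Y &, injective f}].
Proof.
have [n] := ubnP #|Q|; elim: n Q => // n IH Q /ltnSE leQn Q0 fQ.
have [Qf | /subsetPn[x0 Qx0 fx0]] := boolP (Q \subset f @: Q).
  exists Q; split=> //; apply/imset_injP.
  by rewrite eqn_leq leq_imset_card subset_leq_card.
have fQ' : f @: (Q :\ x0) \subset Q :\ x0.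
  apply/subsetP => _ /imsetP[z /setD1P[_ Qz] ->]; rewrite !inE.
  by rewrite (subsetP fQ) ?imset_f // andbT; apply: contraNneq fx0 => <-; rewrite imset_f.
have Q'0 : Q :\ x0 != set0.
  apply/set0Pn; exists (f x0); rewrite !inE (subsetP fQ) ?imset_f // andbT.
  by apply: contraNneq fx0 => {1}<-; rewrite imset_f.
have [|Y [Y0 YQ fY fI]] := IH _ _ Q'0 fQ'.
  by move: leQn; rewrite (cardsD1 x0) Qx0.
by exists Y; split=> //; apply: subset_trans YQ (subsetDl _ _).
Qed.

Lemma card_colors_add_le (T K : finType) (P : {set T}) (c : T -> K) (D : {set K}) :
  D \subset c @: P -> {in D, forall b, 1 < #|color_class P c b|} ->
  #|c @: P| + #|D| <= #|P|.
Proof.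
move=> DP Dgt1.
have -> : #|P| = \sum_(b in c @: P) #|color_class P c b|.
  rewrite -sum1_card (partition_big_imset c); apply: eq_bigr => b _.
  by rewrite -sum1_card; apply: eq_bigl => v; rewrite inE.
have -> : #|D| = \sum_(b in c @: P) (b \in D).
  rewrite -sum1_card -big_mkcondr; apply: eq_bigl => b.
  by rewrite andb_idl // => /(subsetP DP).
rewrite -sum1_card -big_split /=; apply: leq_sum => b Pb.
have [/Dgt1|_] := boolP (b \in D); first by rewrite addn1.
rewrite addn0 card_gt0; apply/set0Pn.
by case/imsetP: Pb => v Pv ->; exists v; rewrite inE Pv eqxx.
Qed.

Section UniqueColoring.

Variables (T K : finType) (e : rel T) (P : {set T}) (L : T -> {set K}) (c : T -> K).
Hypothesis Uc : unique_coloring_on e P L c.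

Lemma unique_coloring_list_sub v : v \in P -> L v \subset c @: P.
Proof.
have [[cL cE] cU] := Uc; move=> Pv; apply/subsetP => b Lb; apply: contraT => nb.
have used z : z \in P -> c z != b.
  by move=> Pz; apply: contraNneq nb => <-; rewrite imset_f.
pose c' u := if u == v then b else c u.
have c'col : coloring_on e P L c'.
  split=> [u Pu | x y Px Py]; rewrite /c'.
    by case: (u =P v) => [->|_]; [exact: Lb | exact: cL].
  case: (x =P v) => [->|_]; case: (y =P v) => [->|_] Exy.
  - by move: (cE _ _ Pv Pv Exy); rewrite eqxx.
  - by rewrite eq_sym used.
  - exact: used.
  - exact: cE.
by have := cU _ c'col v Pv; rewrite /c' eqxx => /= bv; rewrite bv imset_f in nb.
Qed.

Lemma card_list_le_colors v : v \in P -> #|L v| <= #|c @: P|.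
Proof. by move=> Pv; rewrite subset_leq_card ?unique_coloring_list_sub. Qed.

Lemma exists_other_list_color v :
  v \in P -> 1 < #|L v| -> exists2 b, b \in L v & b != c v.
Proof.
move=> Pv; rewrite (cardsD1 (c v)) Uc.1.1 // add1n ltnS card_gt0.
by case/set0Pn=> b /setD1P[nb Lb]; exists b.
Qed.

(* Shifting every color of Y along f is again a coloring, so uniqueness
   forbids Y from meeting the used colors. *)
Lemma unique_coloring_no_arc_cycle (f : K -> K) (Y : {set K}) :
  f @: Y \subset Y -> {in Y &, injective f} ->
  {in Y, forall a, f a != a /\ color_arc P L c a (f a)} ->
  {in Y, forall a, a \notin c @: P}.
Proof.
have [[cL cE] cU] := Uc; move=> fY fI arcY.
have fYY a : a \in Y -> f a \in Y by move=> Ya; rewrite (subsetP fY) ?imset_f.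
pose c' v := if c v \in Y then f (c v) else c v.
have c'col : coloring_on e P L c'.
  split=> [v Pv | x y Px Py Exy]; rewrite /c'.
    case: ifP => [Ycv|_]; last exact: cL.
    have [_ /forall_inP] := arcY _ Ycv; apply.
    by rewrite in_color_class Pv eqxx.
  have cxy := cE _ _ Px Py Exy.
  case: ifP => Yx; case: ifP => Yy.
  - by apply: contra cxy => /eqP/fI-> //.
  - by apply: contraFneq Yy => <-; rewrite fYY.
  - by apply: contraFneq Yx => ->; rewrite fYY.
  - exact: cxy.
move=> a Ya; apply/imsetP => -[v Pv cva].
have := cU _ c'col v Pv; rewrite /c' -cva Ya.
by have [/eqP] := arcY _ Ya.
Qed.

Lemma exists_sink_color (Q : {set K}) :
  Q \subset c @: P -> Q != set0 ->
  exists2 a, a \in Q & {in Q, forall b, b != a -> ~~ color_arc P L c a b}.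
Proof.
move=> QP Q0.
have [/exists_inP[a Qa /forall_inP sink] | noSink] :=
  boolP [exists a in Q, [forall b in Q, (b != a) ==> ~~ color_arc P L c a b]].
  by exists a => // b Qb nba; have := sink b Qb; rewrite nba.
pose f a := odflt a [pick b in Q | (b != a) && color_arc P L c a b].
have fP a : a \in Q -> [/\ f a \in Q, f a != a & color_arc P L c a (f a)].
  move=> Qa; rewrite /f; case: pickP => [b /and3P[] // | none].
  move: noSink; rewrite negb_exists_in => /forall_inP/(_ a Qa).
  rewrite negb_forall_in => /exists_inP[b Qb]; rewrite negb_imply negbK => nab.
  by move: (none b); rewrite Qb nab.
have fQ : f @: Q \subset Q.
  by apply/subsetP => _ /imsetP[a Qa ->]; have [] := fP a Qa.
have [Y [Y0 YQ fY fI]] := exists_stable_injective_subset Q0 fQ.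
have [a Ya] := set0Pn _ Y0.
have arcY : {in Y, forall b, f b != b /\ color_arc P L c b (f b)}.
  by move=> b /(subsetP YQ)/fP[].
by have := unique_coloring_no_arc_cycle fY fI arcY Ya; rewrite (subsetP QP) ?(subsetP YQ).
Qed.

Lemma unique_coloring_remove_class a :
  unique_coloring_on e (P :\: color_class P c a) (fun v => L v :\ a) c.
Proof.
have [[cL cE] cU] := Uc.
have inP' v : (v \in P :\: color_class P c a) = (c v != a) && (v \in P).
  by rewrite inE in_color_class; case: (v \in P); rewrite /= ?andbT ?andbF.
split; first split=> [v | x y].
- by rewrite inP' !inE => /andP[-> /cL].
- by rewrite !inP' => /andP[_ Px] /andP[_ Py]; apply: cE.
move=> c' [c'L c'E] v; rewrite inP' => /andP[/negbTE cva Pv].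
pose c'' u := if c u == a then a else c' u.
have c''L u : u \in P -> c u != a -> c' u \in L u :\ a.
  by move=> Pu cua; apply: c'L; rewrite inP' cua.
have c''col : coloring_on e P L c''.
  split=> [u Pu | x y Px Py Exy]; rewrite /c''.
    by case: eqP => [<-|/eqP cua]; [exact: cL | have /setD1P[] := c''L u Pu cua].
  have cxy := cE _ _ Px Py Exy.
  case: (c x =P a) => [cxa|/eqP cxa]; case: (c y =P a) => [cya|/eqP cya].
  - by rewrite cxa cya eqxx in cxy.
  - by have /setD1P[] := c''L y Py cya; rewrite eq_sym.
  - by have /setD1P[] := c''L x Px cxa.
  - by apply: c'E; rewrite ?inP' ?cxa ?cya.
by have := cU _ c''col v Pv; rewrite /c'' cva.
Qed.

Lemma sink_class_gt1 a :
  a \in c @: P -> {in c @: P, forall b, b != a -> ~~ color_arc P L c a b} ->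
  {in P, forall v, 1 < #|L v|} -> 1 < #|color_class P c a|.
Proof.
case/imsetP=> u Pu ->{a} sink Lgt1; rewrite ltnNge; apply/negP => le1.
have [b Lb nb] := exists_other_list_color Pu (Lgt1 u Pu).
have uc : u \in color_class P c (c u) by rewrite in_color_class Pu eqxx.
have /negP := sink b (subsetP (unique_coloring_list_sub Pu) b Lb) nb; apply.
by apply/forall_inP => v vc; rewrite -(card_le1_eqP le1 v u).
Qed.

(* The two lists of a sink pair, minus the sink color, are disjoint sets of
   other used colors. *)
Lemma card_colors_ge_sink_pair k a u w :
  {in c @: P, forall b, b != a -> ~~ color_arc P L c a b} ->
  color_class P c a = [set u; w] -> k <= #|L u| -> k <= #|L w| ->
  2 * k - 1 <= #|c @: P|.
Proof.
move=> sink cls_uw Lu Lw.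
have [Pu /eqP cua] : u \in P /\ c u == a.
  by apply/andP; rewrite -in_color_class cls_uw set21.
have Pw : w \in P by have := set22 u w; rewrite -cls_uw in_color_class => /andP[].
have Pa : a \in c @: P by rewrite -cua imset_f.
have sub_colors x : x \in P -> L x :\ a \subset c @: P :\ a.
  by move=> Px; apply: setSD; apply: unique_coloring_list_sub.
have disj : [disjoint L u :\ a & L w :\ a].
  rewrite -setI_eq0; apply/eqP/setP => b; rewrite !inE.
  apply/negP => /andP[/andP[nb Lub] /andP[_ Lwb]].
  have /negP := sink b (subsetP (unique_coloring_list_sub Pu) b Lub) nb; apply.
  by apply/forall_inP => v; rewrite cls_uw !inE => /orP[] /eqP->.
have /subset_leq_card : L u :\ a :|: L w :\ a \subset c @: P :\ a.
  by rewrite subUset !sub_colors.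
rewrite cardsU (disjoint_setI0 disj) cards0 subn0 [#|c @: P|](cardsD1 a) Pa.
rewrite [#|L u|](cardsD1 a) [#|L w|](cardsD1 a) in Lu Lw.
by case: (a \in L u) Lu; case: (a \in L w) Lw => /=; lia.
Qed.

Lemma card_double_classes_ge k :
  P != set0 -> {in P, forall v, k <= #|L v|} ->
  k - 1 <= #|[set b in c @: P | 1 < #|color_class P c b|]|.
Proof.
move=> P0 Lk; set D := [set b in c @: P | _].
have [PD | /subsetPn[a Pa nDa]] := boolP (c @: P \subset D).
  have [v Pv] := set0Pn _ P0.
  have := Lk v Pv; have := card_list_le_colors Pv; have := subset_leq_card PD; lia.
have Q0 : c @: P :\: D != set0 by apply/set0Pn; exists a; rewrite inE nDa.
have [b /setDP[Pb nDb] sink] := exists_sink_color (subsetDl (c @: P) D) Q0.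
have le1 : #|color_class P c b| <= 1 by move: nDb; rewrite inE Pb -leqNgt.
have [x Px cxb] := imsetP Pb.
have xb : x \in color_class P c b by rewrite in_color_class Px cxb eqxx.
have LD : L x :\ b \subset D.
  apply/subsetP => g /setD1P[ngb Lg]; apply/negPn/negP => nDg.
  have Pg := subsetP (unique_coloring_list_sub Px) g Lg.
  have gQ : g \in c @: P :\: D by rewrite inE nDg Pg.
  have /negP := sink g gQ ngb; apply.
  by apply/forall_inP => v vb; rewrite -(card_le1_eqP le1 v x).
have := subset_leq_card LD; have := Lk x Px.
by rewrite [#|L x|](cardsD1 b) cxb Uc.1.1 //; lia.
Qed.

Lemma unique_coloring_card_ge_small_classes k :
  P != set0 -> {in P, forall v, k <= #|L v|} ->
  (forall a, #|color_class P c a| <= 2) -> 3 * k - 2 <= #|P|.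
Proof.
move=> P0 Lk le2; have [le_k1 | lt1k] := leqP k 1.
  by have := P0; rewrite -card_gt0; lia.
have Lgt1 : {in P, forall v, 1 < #|L v|} by move=> v /Lk; lia.
have [|a Pa sink] := exists_sink_color (subxx (c @: P)).
  by have [v Pv] := set0Pn _ P0; apply/set0Pn; exists (c v); rewrite imset_f.
have /cards2P[u [w [_ cls_uw]]] : #|color_class P c a| == 2.
  by rewrite eqn_leq le2 sink_class_gt1.
have [Pu Pw] : u \in P /\ w \in P.
  by split; [have := set21 u w | have := set22 u w];
    rewrite -cls_uw in_color_class => /andP[].
have := card_colors_ge_sink_pair sink cls_uw (Lk u Pu) (Lk w Pw).
have := card_double_classes_ge P0 Lk.
set D := [set b in c @: P | 1 < #|color_class P c b|].
have DP : D \subset c @: P by apply/subsetP => b; rewrite inE => /andP[].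
have Dgt1 : {in D, forall b, 1 < #|color_class P c b|}.
  by move=> b; rewrite inE => /andP[].
have := card_colors_add_le DP Dgt1; lia.
Qed.

End UniqueColoring.

Lemma unique_coloring_card_ge (T K : finType) (e : rel T) P L (c : T -> K) k :
  unique_coloring_on e P L c -> P != set0 -> {in P, forall v, k <= #|L v|} ->
  3 * k - 2 <= #|P|.
Proof.
have [n] := ubnP #|P|; elim: n P L c k => // n IH P L c k ltPn Uc P0 Lk.
have [/existsP[a big] | /existsPn small] :=
  boolP [exists a, 2 < #|color_class P c a|]; last first.
  by apply: (unique_coloring_card_ge_small_classes Uc P0 Lk) => a; rewrite leqNgt small.
have [le_k1 | lt1k] := leqP k 1; first by have := P0; rewrite -card_gt0; lia.
set P' := P :\: color_class P c a.
have cardP : #|P| = #|color_class P c a| + #|P'|.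
  rewrite -(cardsID (color_class P c a) P) (setIidPr _) //.
  by apply/subsetP => v; rewrite in_color_class => /andP[].
have P'0 : P' != set0.
  apply: contraTneq lt1k => P'0; rewrite -leqNgt.
  have colors_a : c @: P \subset [set a].
    apply/subsetP => _ /imsetP[u Pu ->]; move/setP/(_ u): P'0.
    by rewrite !inE Pu /=; case: (c u == a).
  have [v Pv] := set0Pn _ P0; have := Lk v Pv.
  have := card_list_le_colors Uc Pv; have := subset_leq_card colors_a.
  rewrite cards1; lia.
have ltP'n : #|P'| < n by move: ltPn; rewrite cardP; lia.
have Lk' : {in P', forall v, k - 1 <= #|L v :\ a|}.
  move=> v /setDP[Pv _]; have := Lk v Pv.
  by rewrite (cardsD1 a); case: (a \in L v) => /=; lia.
have := IH _ _ _ _ ltP'n (unique_coloring_remove_class Uc a) P'0 Lk'.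
by rewrite cardP; lia.
Qed.

(* Only finitely many colors occur, so the lists may be read in ['I_M.+1]. *)
Lemma unique_L_colorable_card_ge (T : finType) (e : rel T) k (L : T -> seq nat) :
  k_list_assignment k L -> unique_L_colorable e L -> 0 < #|T| -> 3 * k - 2 <= #|T|.
Proof.
move=> kL [c [[cL cE] cU]] T0.
pose M := \max_(v : T) \max_(x <- L v) x.
have ltM v x : x \in L v -> x < M.+1.
  move=> Lx; rewrite ltnS (leq_trans (@leq_bigmax_seq _ _ _ id x Lx isT)) //.
  exact: (@leq_bigmax _ (fun v => \max_(y <- L v) y)).
pose Lk v : {set 'I_M.+1} := [set i | nat_of_ord i \in L v].
pose ck v : 'I_M.+1 := inord (c v).
have ckE v : ck v = c v :> nat by rewrite inordK // (ltM v) ?cL.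
have Uck : unique_coloring_on e [set: T] Lk ck.
  split; first split=> [v _ | x y _ _ Exy]; first by rewrite inE ckE cL.
    by apply: contra (cE _ _ Exy) => /eqP/(congr1 (@nat_of_ord _)); rewrite !ckE => ->.
  move=> c' [c'L c'E] v _; apply: ord_inj; rewrite ckE.
  apply: (cU (fun u => nat_of_ord (c' u))); split=> [u | x y Exy].
    by have := c'L u (in_setT u); rewrite inE.
  by apply: contra (c'E _ _ (in_setT x) (in_setT y) Exy) => /eqP/ord_inj->.
have Lk_ge v : v \in [set: T] -> k <= #|Lk v|.
  move=> _; have [uL <-] := kL v.
  have uLk : uniq (map (@inord M) (L v)).
    rewrite map_inj_in_uniq // => x y Lx Ly /(congr1 (@nat_of_ord _)).
    by rewrite !inordK ?(ltM v).
  rewrite -(size_map (@inord M)) -(card_uniqP uLk); apply: subset_leq_card.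
  by apply/subsetP => _ /mapP[x Lx ->]; rewrite inE inordK ?(ltM v).
have := unique_coloring_card_ge Uck _ Lk_ge.
by rewrite -card_gt0 cardsT; apply.
Qed.

Lemma classical_ex_minn (Q : nat -> Prop) i :
  Q i -> exists m, [/\ Q m, m <= i & forall k, k < m -> ~ Q k].
Proof.
have [n] := ubnP i; elim: n i => // n IH i /ltnSE le_in Qi.
have [[j [lt_ji Qj]] | no_less] := classic (exists j, j < i /\ Q j).
  have [|m [Qm le_mj minm]] := IH j _ Qj; first exact: leq_trans lt_ji le_in.
  by exists m; split=> //; apply: leq_trans le_mj (ltnW lt_ji).
by exists i; split=> // k lt_ki Qk; apply: no_less; exists k.
Qed.

Theorem corollary2p3 (T : finType) (e : rel T) :
  simple_graph e -> 1 <= #|T| ->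
  exists m, is_m_number e m /\ m <= ceil_div #|T| 3 + 1.
Proof.
move=> _ T_gt0.
have M_bound : propM e (ceil_div #|T| 3 + 1).
  move=> [L [kL uL]]; have := unique_L_colorable_card_ge kL uL T_gt0.
  rewrite /ceil_div; lia.
have [m [[m_gt0 Mm] le_m minm]] :=
  @classical_ex_minn (fun k => 1 <= k /\ propM e k) _ (conj (leq_addl _ _) M_bound).
exists m; split=> //; split=> //; split=> // k k_gt0 lt_km Mk.
exact: minm k lt_km (conj k_gt0 Mk).
Qed.
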